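(* Let $G$ be a finite group and $X$ a finite $G$-poset. Let $\alpha:X'/G\to(X/G)'$ be defined by $\alpha(\overline{(x_0<x_1<\dots<x_n)})=(\overline{x_0}<\overline{x_1}<\dots<\overline{x_n})$. Then $\alpha$ is injective if and only if $X$ satisfies property (B). Moreover, if $\alpha$ is injective then it is an isomorphism of posets.
   Context: A finite $G$-poset is a finite poset with a right action of $G$ by order-preserving maps. $X'$ denotes the poset of non-empty chains of $X$ ordered by inclusion, with $G$ acting componentwise. For a $G$-poset $Y$, $Y/G$ is the orbit poset: $\overline{y}\le\overline{z}$ iff there exist representatives $y_1\le z_1$. $X$ satisfies property (B) if the simplicial complex $\mathcal{K}(X)$ of non-empty chains of $X$ does, i.e. whenever $\{v_0,\dots,v_n\}$ and $\{v_0^{g_0},\dots,v_n^{g_n}\}$ are both chains of $X$ with $g_i\in G$, there exists $g\in G$ with $v_i^{g_i}=v_i^g$ for all $i$. *)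

From mathcomp Require Import all_boot all_order all_fingroup.
Set Implicit Arguments.
Unset Strict Implicit.
Unset Printing Implicit Defensive.
Import Order.Theory.

Definition chainb (U : finType) (le : rel U) (A : {set U}) : bool :=
  (A != set0) && [forall x in A, forall y in A, le x y || le y x].

Section GPoset.
Variables (gT : finGroupType) (d : Order.disp_t) (T : finPOrderType d)
          (to : {action gT &-> T}).
Local Open Scope order_scope.

Definition chainsX : {set {set T}} := [set A | chainb (fun x y : T => x <= y) A].

Definition orbX (x : T) : {set T} := orbit to [set: gT] x.
Definition XG : {set {set T}} := [set orbX x | x : T].
Definition leXG (a b : {set T}) : bool := [exists x in a, exists y in b, x <= y].

Definition orbC (A : {set T}) : {set {set T}} := orbit (to^*)%act [set: gT] A.
Definition XpG : {set {set {set T}}} := [set orbC A | A in chainsX].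
Definition leXpG (c e : {set {set T}}) : bool :=
  [exists A in c, exists B in e, A \subset B].

Definition chainsXG : {set {set {set T}}} :=
  [set C : {set {set T}} | (C \subset XG) && chainb leXG C].

(* alpha : X'/G -> (X/G)', class of (x0<...<xn) |-> {xbar0,...,xbarn},
   computed on a chosen representative of the class *)
Definition alpha0 (A : {set T}) : {set {set T}} := orbX @: A.
Definition alpha (c : {set {set T}}) : {set {set T}} :=
  alpha0 (odflt set0 [pick A in c]).

Definition propB : Prop :=
  forall (A : {set T}) (f : T -> gT),
    A \in chainsX -> [set to v (f v) | v in A] \in chainsX ->
    exists g : gT, forall v, v \in A -> to v (f v) = to v g.

End GPoset.

(* In a finite G-poset no element lies strictly below one of its translates:
   iterating x < x^g up to the order of g would give x < x.  Hence a chain of X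
   meets every orbit at most once, and two chains with the same image in X/G
   differ by moving each vertex inside its orbit; property (B) says exactly
   that such a move is the action of a single group element, i.e. that alpha
   is injective.  The same transport argument identifies the orders, and every
   chain of orbits lifts to a chain of X by choosing representatives from the
   top down, each below the previous one. *)

From Pilot Require Import Defs.
From mathcomp Require Import all_boot all_order all_fingroup.
Set Implicit Arguments.
Unset Strict Implicit.
Unset Printing Implicit Defensive.
Import Order.Theory.
Local Open Scope order_scope.

Lemma chainbP (U : finType) (le : rel U) (A : {set U}) :
  reflect (A != set0 /\ {in A &, forall x y, le x y || le y x}) (chainb le A).
Proof.
apply: (iffP andP) => -[A0 cA]; split=> //.
  by move=> x y xA yA; move/forall_inP/(_ x xA)/forall_inP: cA; apply.
by apply/forall_inP => x xA; apply/forall_inP => y yA; apply: cA.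
Qed.

Lemma exists_maximal (d : Order.disp_t) (T : finPOrderType d) (U : {set T}) :
  U != set0 -> exists2 x, x \in U & {in U, forall w, ~~ (x < w)}.
Proof.
case/set0Pn=> x0 x0U; pose rank (y : T) := #|[set z | z < y]|.
case: (arg_maxnP rank x0U) => x xU rank_max; exists x => // w wU.
apply: contraTN (rank_max w wU) => ltxw; rewrite -ltnNge; apply: proper_card.
apply/properP; split; last by exists x; rewrite !inE ?ltxx.
by apply/subsetP => z; rewrite !inE => /lt_trans; apply.
Qed.

Section GPoset.
Variables (gT : finGroupType) (d : Order.disp_t) (T : finPOrderType d)
          (to : {action gT &-> T}).
Hypothesis to_mono : forall (g : gT) (x y : T), x <= y -> to x g <= to y g.

Lemma orbXP x y : reflect (exists g, to x g = y) (y \in orbX to x).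
Proof. by apply: (iffP orbitP) => [[g _ <-] | [g <-]]; exists g; rewrite ?inE.
Qed.

Lemma mem_orbX x g : to x g \in orbX to x.
Proof. exact: mem_orbit. Qed.

Lemma orbX_act x g : orbX to (to x g) = orbX to x.
Proof. by rewrite /orbX orbit_act ?inE. Qed.

Lemma orbX_eq x y : y \in orbX to x -> orbX to y = orbX to x.
Proof. by case/orbXP=> g <-; apply: orbX_act. Qed.

Lemma act_lt g x y : x < y -> to x g < to y g.
Proof.
rewrite !lt_neqAle => /andP[neq_xy le_xy]; rewrite to_mono // andbT.
by apply: contra neq_xy => /eqP/act_inj->.
Qed.

Lemma lt_act_selfF x g : (x < to x g) = false.
Proof.
apply/negP => ltx; have ltxn n : x < to x (g ^+ n.+1)%g.
  by elim: n => [|n IHn]; rewrite ?expg1 // expgSr actM (lt_trans ltx) ?act_lt.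
by have := ltxn #[g]%g.-1; rewrite prednK ?order_gt0 // expg_order act1 ltxx.
Qed.

Lemma le_act_eq x g : x <= to x g -> to x g = x.
Proof. by rewrite le_eqVlt lt_act_selfF orbF => /eqP. Qed.

Lemma orbX_comparable_eq x y : y \in orbX to x -> x >=< y -> x = y.
Proof.
case/orbXP=> g <- /orP[/le_act_eq-> // | le_gx].
by move: le_gx; rewrite -{2}(actK to g x) => /le_act_eq; rewrite actK.
Qed.

Lemma chainsXP (A : {set T}) :
  reflect (A != set0 /\ {in A &, forall x y, x >=< y}) (A \in chainsX T).
Proof. by rewrite inE; apply: chainbP. Qed.

Lemma chain_orbX_inj (A : {set T}) :
  A \in chainsX T -> {in A &, injective (orbX to)}.
Proof.
case/chainsXP=> _ cA x y xA yA eq_xy.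
by apply: orbX_comparable_eq (cA x y xA yA); rewrite eq_xy orbit_refl.
Qed.

Lemma chainsX_sub (A B : {set T}) :
  A \subset B -> A != set0 -> B \in chainsX T -> A \in chainsX T.
Proof.
move=> sAB A0 /chainsXP[_ cB]; apply/chainsXP; split=> // x y xA yA.
by apply: cB; apply: (subsetP sAB).
Qed.

Lemma orbCP (A B : {set T}) :
  reflect (exists g, setact to A g = B) (B \in Defs.orbC to A).
Proof. by apply: (iffP orbitP) => [[g _ <-] | [g <-]]; exists g; rewrite ?inE.
Qed.

Lemma XpGP c :
  reflect (exists2 A, A \in chainsX T & c = Defs.orbC to A) (c \in XpG to).
Proof. by apply: (iffP imsetP) => -[A cA ->]; exists A. Qed.

Lemma alpha0_act (A : {set T}) g : alpha0 to (setact to A g) = alpha0 to A.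
Proof.
by rewrite /alpha0 setactE -imset_comp; apply: eq_imset => x; apply: orbX_act.
Qed.

Lemma alpha_orbC (A : {set T}) : alpha to (Defs.orbC to A) = alpha0 to A.
Proof.
rewrite /alpha; case: pickP => [B /orbCP[g <-] | /(_ A)].
  exact: alpha0_act.
by rewrite orbit_refl.
Qed.

Lemma alpha0_inj_sub (A B : {set T}) :
  B \in chainsX T -> A \subset B -> alpha0 to B \subset alpha0 to A -> A = B.
Proof.
move=> cB sAB /subsetP sBA; apply/eqP; rewrite eqEsubset sAB.
apply/subsetP => y yB.
have /imsetP[x xA eq_yx] := sBA _ (imset_f (orbX to) yB).
by rewrite (chain_orbX_inj cB yB (subsetP sAB x xA) eq_yx).
Qed.

(* [1] is a junk value, used only when the orbit of [v] misses [B]. *)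
Definition lift_into (B : {set T}) (v : T) : gT :=
  odflt 1%g [pick g | to v g \in B].

Lemma lift_intoP (B : {set T}) v :
  orbX to v \in alpha0 to B -> to v (lift_into B v) \in B.
Proof.
case/imsetP=> w wB eq_vw.
have /orbXP[g gvw] : w \in orbX to v by rewrite eq_vw orbit_refl.
by rewrite /lift_into; case: pickP => [h // | /(_ g)]; rewrite gvw wB.
Qed.

Definition transport (A B : {set T}) : {set T} :=
  [set to v (lift_into B v) | v in A].

Lemma alpha0_imset_act (A : {set T}) (f : T -> gT) :
  alpha0 to [set to v (f v) | v in A] = alpha0 to A.
Proof.
by rewrite /alpha0 -imset_comp; apply: eq_imset => v; apply: orbX_act.
Qed.

Lemma transport_sub (A B : {set T}) :
  alpha0 to A \subset alpha0 to B -> transport A B \subset B.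
Proof.
move=> /subsetP sAB; apply/subsetP => _ /imsetP[v vA ->].
by apply/lift_intoP/sAB/imset_f.
Qed.

Lemma transport_eq (A B : {set T}) :
  B \in chainsX T -> alpha0 to A = alpha0 to B -> transport A B = B.
Proof.
move=> cB eqAB; apply: alpha0_inj_sub => //.
  by rewrite transport_sub ?eqAB.
by rewrite alpha0_imset_act eqAB.
Qed.

Lemma propB_imset_orbC (A : {set T}) (f : T -> gT) : propB to ->
  A \in chainsX T -> [set to v (f v) | v in A] \in chainsX T ->
  [set to v (f v) | v in A] \in Defs.orbC to A.
Proof.
move=> PB cA cS; have [g fg] := PB A f cA cS.
by apply/orbCP; exists g; rewrite setactE; apply: eq_in_imset => v /fg.
Qed.

Lemma propB_inj : propB to -> {in XpG to &, injective (alpha to)}.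
Proof.
move=> PB _ _ /XpGP[A cA ->] /XpGP[B cB ->]; rewrite !alpha_orbC => eqAB.
have eqTB := transport_eq cB eqAB.
have cTB : transport A B \in chainsX T by rewrite eqTB.
have : transport A B \in Defs.orbC to A := propB_imset_orbC PB cA cTB.
by rewrite eqTB orbit_sym => /orbit_eqP.
Qed.

Lemma inj_propB : {in XpG to &, injective (alpha to)} -> propB to.
Proof.
move=> inj_alpha A f cA; set S := [set to v (f v) | v in A] => cS.
have /orbCP[g AgS] : S \in Defs.orbC to A.
  rewrite -(inj_alpha (Defs.orbC to S) (Defs.orbC to A)) ?orbit_refl //.
  - by apply/XpGP; exists S.
  - by apply/XpGP; exists A.
  - by rewrite !alpha_orbC alpha0_imset_act.
exists g => v vA; apply: (chain_orbX_inj cS); rewrite ?orbX_act //.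
- exact: imset_f.
- by rewrite -AgS setactE; apply/imsetP; exists v.
Qed.

Lemma leXpG_alpha : propB to ->
  {in XpG to &, forall c e, leXpG c e = (alpha to c \subset alpha to e)}.
Proof.
move=> PB _ _ /XpGP[A cA ->] /XpGP[B cB ->]; rewrite !alpha_orbC.
apply/idP/idP.
- case/existsP=> _ /andP[/orbCP[g <-] /existsP[_ /andP[/orbCP[h <-] sAB]]].
  by rewrite -(alpha0_act A g) -(alpha0_act B h) imsetS.
- move=> sAB; have sTB := transport_sub sAB.
  have cTB : transport A B \in chainsX T.
    by apply: chainsX_sub sTB _ cB; rewrite imset_eq0; case/chainsXP: cA.
  apply/existsP; exists (transport A B); rewrite propB_imset_orbC //=.
  by apply/existsP; exists B; rewrite sTB orbit_refl.
Qed.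

Lemma XGP (a : {set T}) : reflect (exists x, a = orbX to x) (a \in XG to).
Proof. by apply: (iffP imsetP) => -[x]; exists x. Qed.

Lemma leXG_orbXr x y :
  reflect (exists g, x <= to y g) (leXG (orbX to x) (orbX to y)).
Proof.
apply: (iffP existsP) => [[_ /andP[/orbXP[h <-] /existsP[q /andP[]]]] | [g le]].
  case/orbXP=> k <- /(to_mono h^-1); rewrite actK -actM.
  by exists (k * h^-1)%g.
exists x; rewrite orbit_refl.
by apply/existsP; exists (to y g); rewrite mem_orbX.
Qed.

Lemma leXG_orbXl x y :
  reflect (exists g, to x g <= y) (leXG (orbX to x) (orbX to y)).
Proof.
apply: (iffP (leXG_orbXr x y)) => -[g /(to_mono g^-1)];
  by rewrite actK; exists g^-1%g.
Qed.

Lemma leXG_orbX x y : x <= y -> leXG (orbX to x) (orbX to y).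
Proof. by move=> le_xy; apply/leXG_orbXr; exists 1%g; rewrite act1. Qed.

Lemma chainXG_top (C : {set {set T}}) :
  C \subset XG to -> C != set0 -> {in C &, forall a b, leXG a b || leXG b a} ->
  exists2 x, orbX to x \in C & {in C, forall a, leXG a (orbX to x)}.
Proof.
move=> /subsetP sCXG C0 cC.
have U0 : \bigcup_(a in C) a != set0.
  case/set0Pn: C0 => a aC; have /XGP[t eq_a] := sCXG a aC.
  apply/set0Pn; exists t; apply/bigcupP.
  by exists a; rewrite // eq_a orbit_refl.
have [x /bigcupP[a aC xa] x_max] := exists_maximal U0.
have eq_a : a = orbX to x.
  by have /XGP[t eq_t] := sCXG a aC; move: xa; rewrite eq_t => /orbX_eq->.
exists x => [|b bC]; first by rewrite -eq_a.
have /XGP[y eq_b] := sCXG b bC.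
case/orP: (cC b a bC aC); first by rewrite eq_a.
rewrite eq_a eq_b => /leXG_orbXr[g le_xyg].
have yg_in_U : to y g \in \bigcup_(a in C) a.
  by apply/bigcupP; exists b; rewrite // eq_b mem_orbX.
have := x_max _ yg_in_U; rewrite lt_neqAle le_xyg andbT negbK => /eqP eq_xyg.
by rewrite eq_xyg orbX_act leXG_orbX.
Qed.

Lemma lift_chainXG_below (C : {set {set T}}) z :
  C \subset XG to -> {in C &, forall a b, leXG a b || leXG b a} ->
  {in C, forall a, leXG a (orbX to z)} ->
  exists A : {set T},
    [/\ {in A &, forall x y, x >=< y}, alpha0 to A = C
       & {in A, forall v, v <= z}].
Proof.
have [n] := ubnP #|C|; elim: n C z => // n IHn C z ltCn sCXG cC leCz.
have [-> | C0] := eqVneq C set0.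
  by exists set0; split=> [x y | | x]; rewrite ?inE // /alpha0 imset0.
have [x xC x_top] := chainXG_top sCXG C0 cC.
have /leXG_orbXl[g le_xgz] := leCz _ xC.
set C' := C :\ orbX to x.
have ltC'n : #|C'| < n.
  by move: ltCn; rewrite (cardsD1 (orbX to x)) xC add1n ltnS.
have sC'XG : C' \subset XG to := subset_trans (subsetDl _ _) sCXG.
have cC' : {in C' &, forall a b, leXG a b || leXG b a}.
  by move=> a b /setD1P[_ aC] /setD1P[_ bC]; apply: cC.
have leC'xg : {in C', forall a, leXG a (orbX to (to x g))}.
  by move=> a /setD1P[_ aC]; rewrite orbX_act x_top.
have [A' [cA' eqA' leA']] := IHn C' (to x g) ltC'n sC'XG cC' leC'xg.
exists (to x g |: A'); split.
- move=> u v /setU1P[-> | uA'] /setU1P[-> | vA'].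
  + exact: comparablexx.
  + exact/ge_comparable/leA'.
  + exact/le_comparable/leA'.
  + exact: cA'.
- by rewrite /alpha0 imsetU1 -/(alpha0 to A') eqA' orbX_act setD1K.
- by move=> v /setU1P[-> // | /leA' /le_trans]; apply.
Qed.

Lemma alpha0_chainsXG (A : {set T}) :
  A \in chainsX T -> alpha0 to A \in chainsXG to.
Proof.
case/chainsXP=> A0 cA; rewrite inE; apply/andP; split.
  by apply/subsetP => _ /imsetP[x _ ->]; apply/XGP; exists x.
apply/chainbP; split; first by rewrite imset_eq0.
move=> _ _ /imsetP[x xA ->] /imsetP[y yA ->].
by case/orP: (cA x y xA yA) => /leXG_orbX->; rewrite ?orbT.
Qed.

Lemma chainsXG_lift (C : {set {set T}}) :
  C \in chainsXG to -> exists2 A, A \in chainsX T & alpha0 to A = C.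
Proof.
rewrite inE => /andP[sCXG /chainbP[C0 cC]].
have [x _ x_top] := chainXG_top sCXG C0 cC.
have [A [cA eqAC _]] := lift_chainXG_below sCXG cC x_top.
exists A => //; apply/chainsXP; split => //.
by rewrite -eqAC /alpha0 imset_eq0 in C0.
Qed.

Lemma alpha_XpG : alpha to @: XpG to = chainsXG to.
Proof.
apply/setP => C; apply/imsetP/idP.
  by case=> _ /XpGP[A cA ->] ->; rewrite alpha_orbC alpha0_chainsXG.
case/chainsXG_lift=> A cA <-.
by exists (Defs.orbC to A); [apply/XpGP; exists A | rewrite alpha_orbC].
Qed.

Lemma alpha_inj_propB : {in XpG to &, injective (alpha to)} <-> propB to.
Proof. by split; [apply: inj_propB | apply: propB_inj]. Qed.

End GPoset.

Theorem proposition2p9 (gT : finGroupType) (d : Order.disp_t)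
  (T : finPOrderType d) (to : {action gT &-> T})
  (Hmono : forall (g : gT) (x y : T), (x <= y)%O -> (to x g <= to y g)%O) :
  ({in XpG to &, injective (alpha to)} <-> propB to) /\
  ({in XpG to &, injective (alpha to)} ->
     alpha to @: XpG to = chainsXG to /\
     {in XpG to &, forall c e, leXpG c e = (alpha to c \subset alpha to e)}).
Proof.
have inj_B := alpha_inj_propB Hmono.
split=> // /inj_B PB.
by split; [apply: alpha_XpG | apply: leXpG_alpha].
Qed.
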